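(* For every directed co-graph $G$, $\mathrm{dpw}(G)=\mathrm{dtw}(G)$.
   Context: Digraphs are finite, without loops or multiple arcs. Operations on vertex-disjoint digraphs $G_1,\ldots,G_k$: the disjoint union $G_1\oplus\cdots\oplus G_k$ (union of vertex and arc sets); the series composition $G_1\otimes\cdots\otimes G_k$ (disjoint union plus all arcs between vertices of $G_i$ and $G_j$ for all $i\neq j$, in both directions); the order composition $G_1\oslash\cdots\oslash G_k$ (disjoint union plus all arcs from vertices of $G_i$ to vertices of $G_j$ for all $i<j$). Directed co-graphs: every single-vertex digraph is a directed co-graph, and if $G_1,\ldots,G_k$ are vertex-disjoint directed co-graphs then their disjoint union, series composition and order composition are directed co-graphs. Directed path-width: a directed path-decomposition of $G=(V,E)$ is a sequence $(X_1,\ldots,X_r)$ of subsets of $V$ with $\bigcup X_i=V$, for each arc $(u,v)$ some $i\le j$ with $u\in X_i,v\in X_j$, and for each vertex the indices of bags containing it forming an interval; width $\max|X_i|-1$; $\mathrm{dpw}(G)$ is the minimum width. Directed tree-width: for $Z\subseteq V$, $S\subseteq V$ is $Z$-normal if no directed walk in $G-Z$ with first and last vertex in $S$ uses a vertex of $G-(Z\cup S)$. A directed tree-decomposition is $(T,\mathcal{X},\mathcal{W})$ with $T=(V_T,E_T)$ an out-tree (rooted tree with arcs directed away from the root; $u\le v$ means a directed path of $\ge0$ arcs from $u$ to $v$), $\mathcal{X}=\{X_e:e\in E_T\}$, $\mathcal{W}=\{W_r:r\in V_T\}$ subsets of $V$, such that $\mathcal{W}$ partitions $V$ into nonempty sets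 and for each $(u,v)\in E_T$ the set $\bigcup\{W_r: v\le r\}$ is $X_{(u,v)}$-normal; width $\max_r|W_r\cup\bigcup_{e\sim r}X_e|-1$ ($e\sim r$: $r$ is an end of $e$); $\mathrm{dtw}(G)$ is the minimum width. *)

(* Digraphs: a finite vertex type T with an arc relation E
   (irreflexivity = no loops; a relation has no multiple arcs). *)
From mathcomp Require Import all_boot.
Set Implicit Arguments. Unset Strict Implicit. Unset Printing Implicit Defensive.

Section Digraphs.
Variable T : finType.
Variable E : rel T.

Definition parts_disjoint (s : seq {set T}) : Prop :=
  forall i j, i < size s -> j < size s -> i != j ->
    [disjoint nth set0 s i & nth set0 s j].

(* dcograph_on A : the subdigraph of (T,E) induced by A is a directed
   co-graph. The k-ary operations (k >= 1) are applied to the induced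
   subdigraphs on the (pairwise disjoint) parts of A; the arcs inside the
   parts are those of the induced subdigraphs, the arcs between distinct
   parts are fixed by the operation. *)
Inductive dcograph_on : {set T} -> Prop :=
| DC_single (x : T) : dcograph_on [set x]
| DC_union (s : seq {set T}) :
    0 < size s -> parts_disjoint s ->
    (forall B, B \in s -> dcograph_on B) ->
    (forall i j x y, i < size s -> j < size s -> i != j ->
       x \in nth set0 s i -> y \in nth set0 s j -> ~~ E x y) ->
    dcograph_on (\bigcup_(B <- s) B)
| DC_series (s : seq {set T}) :
    0 < size s -> parts_disjoint s ->
    (forall B, B \in s -> dcograph_on B) ->
    (forall i j x y, i < size s -> j < size s -> i != j ->
       x \in nth set0 s i -> y \in nth set0 s j -> E x y) ->
    dcograph_on (\bigcup_(B <- s) B)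
| DC_order (s : seq {set T}) :
    0 < size s -> parts_disjoint s ->
    (forall B, B \in s -> dcograph_on B) ->
    (forall i j x y, i < size s -> j < size s -> i < j ->
       x \in nth set0 s i -> y \in nth set0 s j -> E x y && ~~ E y x) ->
    dcograph_on (\bigcup_(B <- s) B).

Definition directed_cograph : Prop := dcograph_on [set: T].

Definition is_dpd (s : seq {set T}) : Prop :=
  [/\ (\bigcup_(X <- s) X) = [set: T],
      (forall u v, E u v -> exists i j, [/\ i <= j, j < size s,
                     u \in nth set0 s i & v \in nth set0 s j]) &
      (forall x i j k, i <= j -> j <= k -> k < size s ->
         x \in nth set0 s i -> x \in nth set0 s k -> x \in nth set0 s j)].

Definition dpd_width (s : seq {set T}) : nat := (\max_(X <- s) #|X|) - 1.

Definition is_dpw (k : nat) : Prop :=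
  (exists s, is_dpd s /\ dpd_width s = k) /\
  (forall s, is_dpd s -> k <= dpd_width s).

Definition normal (Z S : {set T}) : Prop :=
  forall (x : T) (p : seq T), path E x p ->
    all (fun v => v \notin Z) (x :: p) ->
    x \in S -> last x p \in S ->
    all (fun v => v \in S) (x :: p).

(* out-tree on the node set 'I_m with arc relation ET: a root r with no
   in-arcs, every other node has exactly one in-arc, all nodes reachable
   from r. u <= v in the tree is connect ET u v. *)
Definition out_tree (m : nat) (ET : rel 'I_m) : Prop :=
  exists r : 'I_m,
    [/\ forall u, ~~ ET u r,
        forall v, v != r -> #|[set u | ET u v]| = 1 &
        forall v, connect ET r v].

(* directed tree-decomposition (T_tree, X, W); X u v is X_e for e = (u,v) *)
Definition is_dtd (m : nat) (ET : rel 'I_m)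
    (X : 'I_m -> 'I_m -> {set T}) (W : 'I_m -> {set T}) : Prop :=
  [/\ out_tree ET,
      (forall r, W r != set0),
      (forall r r', r != r' -> [disjoint W r & W r']),
      (\bigcup_r W r) = [set: T] &
      (forall u v, ET u v -> normal (X u v) (\bigcup_(r | connect ET v r) W r))].

Definition dtd_bag (m : nat) (ET : rel 'I_m)
    (X : 'I_m -> 'I_m -> {set T}) (W : 'I_m -> {set T}) (r : 'I_m) : {set T} :=
  W r :|: (\bigcup_(u | ET u r) X u r) :|: (\bigcup_(v | ET r v) X r v).

Definition dtd_width (m : nat) (ET : rel 'I_m)
    (X : 'I_m -> 'I_m -> {set T}) (W : 'I_m -> {set T}) : nat :=
  (\max_r #|dtd_bag ET X W r|) - 1.

Definition is_dtw (k : nat) : Prop :=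
  (exists m (ET : rel 'I_m) X W, is_dtd ET X W /\ dtd_width ET X W = k) /\
  (forall m (ET : rel 'I_m) X W, is_dtd ET X W -> k <= dtd_width ET X W).

End Digraphs.

From mathcomp Require Import all_boot zify.
Set Implicit Arguments. Unset Strict Implicit. Unset Printing Implicit Defensive.

(* Both widths are squeezed between the order of a haven and the width of a
   path-decomposition. A haven of order k assigns to every set Z of at most k
   vertices a nonempty strongly connected part of G - Z, monotonically in Z. In a
   path-decomposition with bags of size at most k, the part assigned to bag i
   meets a later bag (a walk to the part of bag i+1 would otherwise have to cross
   the separator of bags i and i+1), which fails at the last bag. In a
   tree-decomposition, the part assigned to the bag of a node lies in its subtree
   and normality pushes it into the subtree of a child, an infinite descent.
   Conversely, sorting the vertices by their first bag turns a path-decomposition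
   into a tree-decomposition over a path with no larger bags.
   For a directed co-graph, induction on its expression yields a haven of order k
   together with a path-decomposition with bags of size at most k+1: unions and
   order compositions keep the larger haven and concatenate decompositions; the
   series composition of A1 and A2 gets order min(k1 + |A2|, k2 + |A1|), using
   the haven of A1 once all of A2 is deleted, that of A2 once all of A1 is
   deleted, and the whole remaining graph otherwise, matched by adding A2 (or A1)
   to every bag. *)

Lemma path_exit (V : eqType) (e : rel V) (Q : pred V) x p :
  path e x p -> Q x -> ~~ Q (last x p) ->
  exists u w, [/\ e u w, Q u, ~~ Q w, u \in x :: p & w \in x :: p].
Proof.
elim: p x => [|y p IH] x /=; first by move=> _ ->.
case/andP=> exy pp Qx Ql; case Qy: (Q y).
- have [u [w [euw Qu Qw up wp]]] := IH y pp Qy Ql.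
  by exists u, w; split=> //; rewrite in_cons ?up ?wp orbT.
- by exists x, y; split=> //; rewrite ?Qy // !in_cons eqxx ?orbT.
Qed.

Lemma connect_neq_step (V : finType) (e : rel V) x y :
  connect e x y -> x != y -> exists2 z, e x z & connect e z y.
Proof.
case/connectP => [[|z p]] /=; first by move=> _ ->; rewrite eqxx.
by case/andP => exz pz -> _; exists z => //; apply/connectP; exists p.
Qed.

Lemma out_tree_acyclic m (ET : rel 'I_m) t c :
  out_tree ET -> ET t c -> ~~ connect ET c t.
Proof.
case=> r [noin indeg reach] etc; apply/negP => ct.
pose C := [set x | connect ET c x && connect ET x t].
have predC x : x \in C -> exists2 y, y \in C & ET y x.
  rewrite inE => /andP [cx xt]; have [->|xc] := eqVneq x c.
    by exists t => //; rewrite inE ct connect0.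
  case/connectP: cx => p; case/lastP: p => [|p z] pth lst.
    by rewrite lst eqxx in xc.
  rewrite last_rcons in lst; subst x; move: pth; rewrite rcons_path => /andP [pth ex].
  exists (last c p) => //; rewrite inE (connect_trans (connect1 ex) xt) andbT.
  by apply/connectP; exists p.
have rC : r \notin C by apply/negP => /predC [y _]; rewrite (negbTE (noin y)).
have tC : t \in C by rewrite inE ct connect0.
case/connectP: (reach t) => p pth lst.
have := path_exit (Q := [predC C]) pth rC.
rewrite -lst /= tC => /(_ isT) [u [w [euw uC /negPn wC _ _]]].
have [y yC eyw] := predC w wC.
have : [set u; y] \subset [set u0 | ET u0 w].
  by apply/subsetP => z; rewrite !inE => /orP [] /eqP ->; rewrite ?euw ?eyw.
move/subset_leq_card; rewrite indeg; last by apply: contraNneq rC => <-.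
by rewrite cards2; case: eqVneq uC => // ->; rewrite yC.
Qed.

Section Digraph.
Variables (T : finType) (E : rel T).

Lemma mem_bigcup_nth (s : seq {set T}) x :
  reflect (exists2 i, i < size s & x \in nth set0 s i) (x \in \bigcup_(X <- s) X).
Proof.
have -> : (x \in \bigcup_(X <- s) X) = has (fun X : {set T} => x \in X) s.
  by elim: s => [|X s IH]; rewrite ?big_nil ?in_set0 // big_cons in_setU IH.
exact: (has_nthP set0).
Qed.

Lemma out_closed_normal (Z S : {set T}) :
  (forall u w, E u w -> u \in S -> w \notin Z -> w \in S) -> normal E Z S.
Proof.
move=> closed x p; elim: p x => [|y p IH] x /=; first by move=> _ _ ->.
case/andP=> exy pp /andP [_ pZ] xS lS; rewrite xS; apply: IH => //.
by apply: (closed x) => //; case/andP: pZ.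
Qed.

Definition linked_in (D C : {set T}) :=
  forall a b, a \in C -> b \in C ->
    exists p, [/\ path E a p, last a p = b & all (fun v => v \in D) p].

Lemma linked_in_sub (D D' C : {set T}) :
  D \subset D' -> linked_in D C -> linked_in D' C.
Proof.
move=> sD lC a b aC bC; have [p [pp lp Dp]] := lC a b aC bC.
by exists p; split=> //; apply: sub_all Dp => v; exact: (subsetP sD).
Qed.

Lemma linked_normal_sub (Z S C : {set T}) y :
  normal E Z S -> C \subset ~: Z -> linked_in (~: Z) C -> y \in C -> y \in S ->
  C \subset S.
Proof.
move=> nS CZ lC yC yS; apply/subsetP => y' y'C.
have [p [pp lp Zp]] := lC y y' yC y'C.
have [q [pq lq Zq]] := lC y' y y'C yC.
have offZ r : all (fun v => v \in ~: Z) r -> all (fun v => v \notin Z) r.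
  by apply: sub_all => v; rewrite inE.
have yZ : y \notin Z by rewrite -in_setC (subsetP CZ).
have := nS y (p ++ q); rewrite cat_path pp lp pq last_cat lp lq /= yZ all_cat.
rewrite (offZ _ Zp) (offZ _ Zq) => /(_ isT isT yS yS) /andP [_].
rewrite all_cat => /andP [/allP pS _].
have : y' \in y :: p by rewrite -lp mem_last.
by rewrite in_cons => /predU1P [-> //|/pS].
Qed.

Definition haven (A : {set T}) (k : nat) (beta : {set T} -> {set T}) :=
  forall Z : {set T}, #|Z :&: A| <= k ->
    [/\ beta Z != set0, beta Z \subset A :\: Z, linked_in (A :\: Z) (beta Z) &
        forall Z' : {set T}, Z :&: A \subset Z' -> #|Z' :&: A| <= k ->
          beta Z' \subset beta Z].

Lemma havenT k beta (Z : {set T}) : haven [set: T] k beta -> #|Z| <= k ->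
  [/\ beta Z != set0, beta Z \subset ~: Z, linked_in (~: Z) (beta Z) &
      forall Z' : {set T}, Z \subset Z' -> #|Z'| <= k -> beta Z' \subset beta Z].
Proof.
move=> hv kZ; have [|ne sub lnk mono] := hv Z; first by rewrite setIT.
rewrite setTD in sub lnk; split=> // Z' sZ kZ'.
by apply: mono; rewrite setIT.
Qed.

Lemma haven_subset (A A' : {set T}) k beta :
  A \subset A' -> haven A k beta -> haven A' k beta.
Proof.
move=> sA hv Z kZ.
have kZA Z' : #|Z' :&: A'| <= k -> #|Z' :&: A| <= k.
  by move/(leq_trans _); apply; apply/subset_leq_card/setIS.
have [ne sub lnk mono] := hv Z (kZA Z kZ); split=> //.
- exact: subset_trans sub (setSD _ sA).
- exact: linked_in_sub (setSD _ sA) lnk.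
- move=> Z' sZ kZ'; apply: mono (kZA Z' kZ').
  exact: subset_trans (setIS _ sA) sZ.
Qed.

Lemma haven_card A k beta : haven A k beta -> k < #|A|.
Proof.
move=> hv; rewrite ltnNge; apply/negP => kA.
have [|ne sub _ _] := hv A; first by rewrite setIid.
by move: sub; rewrite setDv subset0 (negbTE ne).
Qed.

Lemma dpd_width_leqP (s : seq {set T}) k :
  reflect (forall X, X \in s -> #|X| <= k.+1) (dpd_width s <= k).
Proof.
rewrite /dpd_width leq_subLR add1n.
by apply: (iffP (bigmax_leqP_seq _ _ _ _)) => [leX X Xs | leX X Xs _]; apply: leX.
Qed.

Lemma dtd_width_leqP m (ET : rel 'I_m) (X : 'I_m -> 'I_m -> {set T}) W k :
  reflect (forall r, #|dtd_bag ET X W r| <= k.+1) (dtd_width ET X W <= k).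
Proof.
rewrite /dtd_width leq_subLR add1n.
by apply: (iffP (bigmax_leqP _ _ _)) => [leX r | leX r _]; apply: leX.
Qed.

Definition occurs_after (s : seq {set T}) i v :=
  has (fun X : {set T} => v \in X) (drop i.+1 s).

Lemma occurs_afterP (s : seq {set T}) i v :
  reflect (exists2 a, i < a < size s & v \in nth set0 s a) (occurs_after s i v).
Proof.
apply: (iffP (has_nthP set0)) => [[j]|[a /andP [ia al] va]].
- rewrite size_drop nth_drop => jl vj; exists (i.+1 + j) => //.
  by apply/andP; split; lia.
- exists (a - i.+1); rewrite ?size_drop ?nth_drop ?subnKC //; lia.
Qed.

Lemma dpd_arc_separator (s : seq {set T}) i u w : is_dpd E s -> E u w ->
  occurs_after s i u -> ~~ occurs_after s i w ->
  u \in nth set0 s i :&: nth set0 s i.+1.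
Proof.
case=> _ arcs conv euw /occurs_afterP [a /andP [ia al] ua] wi.
have [p [q [pq ql up wq]]] := arcs u w euw.
have qi : q <= i.
  by rewrite leqNgt; apply: contra wi => iq; apply/occurs_afterP; exists q; rewrite ?iq.
have pi : p <= i := leq_trans pq qi.
by rewrite inE (conv u p i a) ?(conv u p i.+1 a) // ?(leq_trans pi) // ltnW.
Qed.

Lemma haven_occurs_after_step k beta (s : seq {set T}) i :
  haven [set: T] k beta -> is_dpd E s -> (forall j, #|nth set0 s j| <= k) ->
  (exists2 y, y \in beta (nth set0 s i) & occurs_after s i y) ->
  exists2 y, y \in beta (nth set0 s i.+1) & occurs_after s i.+1 y.
Proof.
move=> hv ds ks [y1 y1C y1a].
set Z := nth set0 s i :&: nth set0 s i.+1.
have kZ : #|Z| <= k by apply: leq_trans (ks i); apply/subset_leq_card/subsetIl.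
have [_ sZ lZ mZ] := havenT hv kZ.
have [ne1 s1 _ _] := havenT hv (ks i.+1).
case/set0Pn: ne1 => y2 y2C.
have [|y2n] := boolP (occurs_after s i.+1 y2); first by exists y2.
have y2i : ~~ occurs_after s i y2.
  apply/occurs_afterP => -[a /andP [ia al] y2a].
  case: (ltngtP a i.+1) => [ai|ai|ai]; first lia.
  - by move/negP: y2n; apply; apply/occurs_afterP; exists a; rewrite ?ai ?al.
  - by move: (subsetP s1 y2 y2C); rewrite inE -ai y2a.
have y1Z := subsetP (mZ _ (subsetIl _ _) (ks i)) y1 y1C.
have y2Z := subsetP (mZ _ (subsetIr _ _) (ks i.+1)) y2 y2C.
have [p [pp lp Zp]] := lZ y1 y2 y1Z y2Z.
have := path_exit pp y1a; rewrite lp => /(_ y2i) [u [w [euw ua wi up _]]].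
have : u \in ~: Z.
  by move: up; rewrite in_cons => /predU1P [->|/(allP Zp) //]; exact: subsetP sZ y1 y1Z.
by rewrite inE (dpd_arc_separator ds euw ua wi).
Qed.

Lemma haven_dpd_width k beta (s : seq {set T}) :
  haven [set: T] k beta -> is_dpd E s -> k <= dpd_width s.
Proof.
case: k => // k hv ds; rewrite ltnNge; apply/negP => /dpd_width_leqP ks.
have ks' j : #|nth set0 s j| <= k.+1.
  by case: (ltnP j (size s)) => jl; [apply/ks/mem_nth | rewrite nth_default ?cards0].
have after0 : exists2 y, y \in beta (nth set0 s 0) & occurs_after s 0 y.
  have [ne sb _ _] := havenT hv (ks' 0); case/set0Pn: ne => y yC; exists y => //.
  have [cover _ _] := ds.
  have /mem_bigcup_nth [a al ya] : y \in \bigcup_(X <- s) X by rewrite cover inE.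
  apply/occurs_afterP; exists a => //; rewrite al andbT lt0n.
  by apply: contraTneq (subsetP sb y yC) => a0; rewrite inE negbK -a0.
have [y _] : exists2 y, y \in beta (nth set0 s (size s)) & occurs_after s (size s) y.
  by elim: (size s) => // i IH; exact: haven_occurs_after_step hv ds ks' IH.
by rewrite /occurs_after drop_oversize.
Qed.

Definition dtd_below m (ET : rel 'I_m) (W : 'I_m -> {set T}) t :=
  \bigcup_(r | connect ET t r) W r.

Lemma dtd_below_proper m (ET : rel 'I_m) (X : 'I_m -> 'I_m -> {set T}) W t c :
  is_dtd E ET X W -> ET t c -> dtd_below ET W c \proper dtd_below ET W t.
Proof.
case=> ot Wne Wdis _ _ etc; apply/properP; split.
- apply/subsetP => v /bigcupP [r cr vr]; apply/bigcupP; exists r => //.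
  exact: connect_trans (connect1 etc) cr.
- case/set0Pn: (Wne t) => w wt; exists w; first by apply/bigcupP; exists t.
  apply/bigcupP => -[r cr wr]; have [tr|tr] := eqVneq t r.
  + by move: (out_tree_acyclic ot etc); rewrite tr cr.
  + by move: (disjointFr (Wdis t r tr) wt); rewrite wr.
Qed.

Lemma haven_dtd_step k beta m (ET : rel 'I_m) X W t :
  haven [set: T] k beta -> is_dtd E ET X W -> (forall r, #|dtd_bag ET X W r| <= k) ->
  beta (dtd_bag ET X W t) \subset dtd_below ET W t ->
  exists2 c, ET t c & beta (dtd_bag ET X W c) \subset dtd_below ET W c.
Proof.
move=> hv [_ _ _ _ nrm] kb sub.
have [ne sbY _ _] := havenT hv (kb t).
case/set0Pn: ne => y yY; have /bigcupP [r tr yr] := subsetP sub y yY.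
have neq_tr : t != r.
  by apply: contraTneq (subsetP sbY y yY) => ->; rewrite inE negbK !inE yr.
have [c tc cr] := connect_neq_step tr neq_tr.
have Xt : X t c \subset dtd_bag ET X W t.
  exact: subset_trans (bigcup_sup c tc) (subsetUr _ _).
have Xc : X t c \subset dtd_bag ET X W c.
  exact: subset_trans (bigcup_sup t tc) (subset_trans (subsetUr _ _) (subsetUl _ _)).
have [_ sbX lX mX] := havenT hv (leq_trans (subset_leq_card Xt) (kb t)).
have yX := subsetP (mX _ Xt (kb t)) y yY.
have yc : y \in dtd_below ET W c by apply/bigcupP; exists r.
exists c => //; apply: subset_trans (mX _ Xc (kb c)) _.
exact: linked_normal_sub (nrm t c tc) sbX lX yX yc.
Qed.

Lemma haven_dtd_width k beta m (ET : rel 'I_m) X W :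
  haven [set: T] k beta -> is_dtd E ET X W -> k <= dtd_width ET X W.
Proof.
case: k => // k hv dt; rewrite ltnNge; apply/negP => /dtd_width_leqP kb.
suff descent n t : #|dtd_below ET W t| <= n ->
    ~ beta (dtd_bag ET X W t) \subset dtd_below ET W t.
  have [[r0 [_ _ reach]] _ _ cover _] := dt.
  apply: (descent _ r0 (leqnn _)); apply/subsetP => v _.
  have /bigcupP [r _ vr] : v \in \bigcup_r W r by rewrite cover inE.
  by apply/bigcupP; exists r.
elim: n t => [|n IH] t tn /(haven_dtd_step hv dt kb) [c tc sub];
  have := proper_card (dtd_below_proper dt tc); first lia.
by move=> lt; apply: (IH c) => //; lia.
Qed.

Definition succ_rel n : rel 'I_n := fun a b => b == a.+1 :> nat.
Arguments succ_rel : clear implicits.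

Lemma connect_succ n (a b : 'I_n) : connect (succ_rel n) a b = (a <= b).
Proof.
apply/idP/idP.
- case/connectP => p; elim: p a => [|c p IH] a /=; first by move=> _ ->.
  by case/andP => /eqP ac pth lst; have := IH c pth lst; lia.
- case: b => b bn /=; elim: b bn => [|b IH] bn ab.
    by rewrite (_ : a = Ordinal bn) ?connect0 //; apply: val_inj => /=; lia.
  have [ab'|ba] := leqP a b.
    by apply: connect_trans (IH (ltnW bn) ab') (connect1 _); exact: eqxx.
  by rewrite (_ : a = Ordinal bn) ?connect0 //; apply: val_inj => /=; lia.
Qed.

Lemma out_tree_succ n : 0 < n -> out_tree (succ_rel n).
Proof.
move=> n0; exists (Ordinal n0); split=> [u|v v0|v]; last by rewrite connect_succ.
- by rewrite /succ_rel.
- have vn : v.-1 < n by apply: leq_ltn_trans (leq_pred v) (ltn_ord v).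
  have v0' : 0 < v by rewrite lt0n; apply: contraNneq v0 => v0; apply/eqP/val_inj.
  suff -> : [set u | succ_rel n u v] = [set Ordinal vn] by rewrite cards1.
  by apply/setP => u; rewrite !inE -val_eqE /succ_rel /=; apply/eqP/eqP; lia.
Qed.

Definition first_bag (s : seq {set T}) v := find (fun X : {set T} => v \in X) s.

Lemma first_bag_min s v i : v \in nth set0 s i -> first_bag s v <= i.
Proof. by move=> vi; rewrite leqNgt; apply: contraL vi => /(before_find set0) /= ->. Qed.

Section Layout.
Variables (s : seq {set T}) (x0 : T).
Hypothesis dpd : is_dpd E s.

Lemma has_first_bag v : has (fun X : {set T} => v \in X) s.
Proof.
by case: dpd => cover _ _; apply/(has_nthP set0)/mem_bigcup_nth; rewrite cover inE.
Qed.

Lemma first_bag_lt v : first_bag s v < size s.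
Proof. by rewrite -has_find has_first_bag. Qed.

Lemma mem_first_bag v : v \in nth set0 s (first_bag s v).
Proof. exact: nth_find (has_first_bag v). Qed.

Definition first_le u v := first_bag s u <= first_bag s v.

Definition layout := sort first_le (enum T).

Lemma mem_layout v : v \in layout.
Proof. by rewrite mem_sort mem_enum. Qed.

Lemma size_layout : size layout = #|T|.
Proof. by rewrite size_sort cardT. Qed.

Lemma index_layout v : index v layout < #|T|.
Proof. by rewrite -size_layout index_mem mem_layout. Qed.

Lemma first_bag_layout a b : a <= b -> b < #|T| ->
  first_bag s (nth x0 layout a) <= first_bag s (nth x0 layout b).
Proof.
move=> ab bT; have tr : transitive first_le by move=> ? ? ?; exact: leq_trans.
have sorted_layout : sorted first_le layout.
  by apply: sort_sorted => u v; exact: leq_total.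
have := sorted_leq_nth tr (fun v => leqnn _) x0 sorted_layout.
by apply; rewrite ?inE ?size_layout // (leq_ltn_trans ab).
Qed.

(* The out-tree is the path v_0 -> v_1 -> ... of the vertices sorted by their
   first bag; the arc into v_b is guarded by the earlier vertices lying in the
   first bag of v_b. *)
Definition layout_W (j : 'I_#|T|) := [set nth x0 layout j].

Definition layout_X (a b : 'I_#|T|) :=
  [set v in nth set0 s (first_bag s (nth x0 layout b)) | index v layout < b].

Lemma layout_normal a b :
  normal E (layout_X a b) (\bigcup_(r | connect (succ_rel _) b r) layout_W r).
Proof.
have [_ arcs conv] := dpd.
apply: out_closed_normal => u w uw /bigcupP [r br]; rewrite inE => /eqP ur wX.
apply/bigcupP; exists (Ordinal (index_layout w)); last first.
  by rewrite inE /= nth_index ?mem_layout.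
rewrite connect_succ /= leqNgt; apply: contra wX => wb; rewrite inE wb andbT.
have [p [q [pq ql up wq]]] := arcs u w uw.
have wb' : first_bag s w <= first_bag s (nth x0 layout b).
  by have := first_bag_layout (ltnW wb) (ltn_ord b); rewrite nth_index ?mem_layout.
have bq : first_bag s (nth x0 layout b) <= q.
  rewrite (leq_trans _ pq) // (leq_trans _ (first_bag_min up)) // ur.
  by apply: first_bag_layout (ltn_ord r); rewrite -connect_succ.
exact: conv wb' bq ql (mem_first_bag w) wq.
Qed.

Lemma layout_dtd : is_dtd E (succ_rel #|T|) layout_X layout_W.
Proof.
split=> [||r r' rr'||a b _]; last exact: layout_normal.
- exact/out_tree_succ/(leq_ltn_trans _ (index_layout x0)).
- by move=> r; apply/set0Pn; exists (nth x0 layout r); rewrite inE.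
- by rewrite disjoints1 inE nth_uniq ?size_layout ?sort_uniq ?enum_uniq.
- apply/setP => v; rewrite inE; apply/bigcupP; exists (Ordinal (index_layout v)) => //.
  by rewrite inE /= nth_index ?mem_layout.
Qed.

Lemma layout_bag_sub r : dtd_bag (succ_rel #|T|) layout_X layout_W r
  \subset nth set0 s (first_bag s (nth x0 layout r)).
Proof.
have [_ _ conv] := dpd.
apply/subsetP => v; rewrite !in_setU in_set1.
case/orP => [/orP [/eqP -> | /bigcupP [u _]] | /bigcupP [c rc]].
- exact: mem_first_bag.
- by rewrite inE => /andP [].
- rewrite inE /succ_rel => /andP [vc vr]; move/eqP: rc => rc.
  have vr' : first_bag s v <= first_bag s (nth x0 layout r).
    have := @first_bag_layout (index v layout) r; rewrite nth_index ?mem_layout //.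
    by apply=> //; rewrite -ltnS -rc.
  have rc' : first_bag s (nth x0 layout r) <= first_bag s (nth x0 layout c).
    by apply: first_bag_layout (ltn_ord c); rewrite rc.
  exact: conv vr' rc' (first_bag_lt _) (mem_first_bag v) vc.
Qed.

End Layout.

Lemma dpd_to_dtd (s : seq {set T}) (x0 : T) : is_dpd E s ->
  exists m (ET : rel 'I_m) X W, is_dtd E ET X W /\ dtd_width ET X W <= dpd_width s.
Proof.
move=> ds; exists #|T|, (succ_rel _), (layout_X s x0), (layout_W s x0).
split; first exact: layout_dtd.
apply/dtd_width_leqP => r; apply: leq_trans (subset_leq_card (layout_bag_sub x0 ds r)) _.
have /dpd_width_leqP := leqnn (dpd_width s); apply.
exact/mem_nth/first_bag_lt.
Qed.

Definition dpd_on (A : {set T}) (s : seq {set T}) :=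
  [/\ \bigcup_(X <- s) X = A,
      (forall u v, u \in A -> v \in A -> E u v -> exists i j,
         [/\ i <= j, j < size s, u \in nth set0 s i & v \in nth set0 s j]) &
      (forall x i j k, i <= j -> j <= k -> k < size s ->
         x \in nth set0 s i -> x \in nth set0 s k -> x \in nth set0 s j)].

Lemma dpd_onT s : dpd_on [set: T] s -> is_dpd E s.
Proof. by case=> cover arcs conv; split=> // u v; apply: arcs. Qed.

Lemma dpd_on_sub A s i : dpd_on A s -> nth set0 s i \subset A.
Proof.
case=> cover _ _; apply/subsetP => x xi; rewrite -cover; apply/mem_bigcup_nth.
by exists i => //; case: ltnP xi => // /(nth_default set0) ->; rewrite in_set0.
Qed.

Lemma dpd_on_set1 x : dpd_on [set x] [:: [set x]].
Proof.
split; first by rewrite big_seq1.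
- by move=> u v /set1P -> /set1P -> _; exists 0, 0; rewrite set11.
- move=> y i j k ij jk /= k1; have j0 : j = 0 by lia.
  by rewrite j0 (_ : i = 0) //; lia.
Qed.

Lemma dpd_on_cat A1 A2 s1 s2 : dpd_on A1 s1 -> dpd_on A2 s2 -> [disjoint A1 & A2] ->
  (forall x y, x \in A1 -> y \in A2 -> ~~ E y x) -> dpd_on (A1 :|: A2) (s1 ++ s2).
Proof.
move=> d1 d2 dA noE; have [U1 arcs1 conv1] := d1; have [U2 arcs2 conv2] := d2.
have nthl i : i < size s1 -> nth set0 (s1 ++ s2) i = nth set0 s1 i.
  by move=> il; rewrite nth_cat il.
have nthr i : size s1 <= i -> nth set0 (s1 ++ s2) i = nth set0 s2 (i - size s1).
  by move=> il; rewrite nth_cat ltnNge il.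
split.
- by rewrite big_cat /= U1 U2.
- move=> u v; rewrite !inE size_cat => /orP [u1|u2] /orP [v1|v2] uv.
  + have [i [j [ij jl ui vj]]] := arcs1 u v u1 v1 uv.
    by exists i, j; rewrite !nthl //; [split=> //; lia | lia].
  + have /mem_bigcup_nth [i il ui] : u \in \bigcup_(X <- s1) X by rewrite U1.
    have /mem_bigcup_nth [j jl vj] : v \in \bigcup_(X <- s2) X by rewrite U2.
    exists i, (size s1 + j); rewrite nthl // nthr ?leq_addr // addKn.
    by split=> //; lia.
  + by rewrite (negbTE (noE v u v1 u2)) in uv.
  + have [i [j [ij jl ui vj]]] := arcs2 u v u2 v2 uv.
    exists (size s1 + i), (size s1 + j); rewrite !nthr ?leq_addr // !addKn.
    by split=> //; lia.
- move=> x i j k ij jk; rewrite size_cat => kl.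
  have [ks|ks] := ltnP k (size s1); first by rewrite !nthl; try lia; exact: conv1.
  have [i1|i1] := ltnP i (size s1).
  + rewrite nthl // nthr // => /(subsetP (dpd_on_sub i d1)) x1.
    by move/(subsetP (dpd_on_sub (k - size s1) d2)); rewrite (disjointFr dA x1).
  + rewrite !nthr; try lia; apply: conv2; lia.
Qed.

Lemma dpd_on_setUr A1 A2 s : dpd_on A1 s -> A1 != set0 ->
  dpd_on (A1 :|: A2) [seq X :|: A2 | X <- s].
Proof.
case=> cover arcs conv /set0Pn [x0 x0A].
have bag u : u \in A1 -> exists2 i, i < size s & u \in nth set0 s i.
  by rewrite -cover => /mem_bigcup_nth.
have [i0 s0 _] := bag x0 x0A.
have nthU i : i < size s -> nth set0 [seq X :|: A2 | X <- s] i = nth set0 s i :|: A2.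
  by move=> il; rewrite (nth_map set0).
split.
- apply/setP => x; apply/mem_bigcup_nth/idP; rewrite size_map.
  + case=> i il; rewrite nthU // !inE => /orP [xi|->]; last by rewrite orbT.
    by rewrite -cover; apply/orP; left; apply/mem_bigcup_nth; exists i.
  + rewrite inE => /orP [/bag [i il xi]|x2].
    * by exists i; rewrite // nthU // inE xi.
    * by exists i0; rewrite // nthU ?inE ?x2 ?orbT //; lia.
- move=> u v; rewrite !inE size_map => /orP [u1|u2] /orP [v1|v2] uv.
  + have [i [j [ij jl ui vj]]] := arcs u v u1 v1 uv.
    by exists i, j; rewrite !nthU ?inE ?ui ?vj //; lia.
  + have [i il ui] := bag u u1.
    by exists i, i; rewrite !nthU // !inE ui v2 orbT.
  + have [j jl vj] := bag v v1.
    by exists j, j; rewrite !nthU // !inE vj u2 orbT.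
  + by exists i0, i0; rewrite !nthU ?inE ?u2 ?v2 ?orbT //; lia.
- move=> x i j k ij jk; rewrite size_map => kl.
  rewrite !nthU; try lia; rewrite !inE; case: (x \in A2); rewrite ?orbT ?orbF //.
  exact: conv.
Qed.

Lemma cardsIU_disjoint (Z A1 A2 : {set T}) : [disjoint A1 & A2] ->
  #|Z :&: (A1 :|: A2)| = #|Z :&: A1| + #|Z :&: A2|.
Proof.
move=> dA; rewrite setIUr; apply/eqP; rewrite (leq_card_setU _ _).2.
exact: disjointW (subsetIr _ _) (subsetIr _ _) dA.
Qed.

Lemma linked_in_join (D1 D2 : {set T}) : D1 != set0 -> D2 != set0 ->
  (forall x y, x \in D1 -> y \in D2 -> E x y && E y x) ->
  linked_in (D1 :|: D2) (D1 :|: D2).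
Proof.
move=> /set0Pn [c1 c1D] /set0Pn [c2 c2D] both a b aD bD.
have fw x y xD yD : E x y := proj1 (andP (both x y xD yD)).
have bw x y xD yD : E y x := proj2 (andP (both x y xD yD)).
move: aD bD; rewrite !inE => /orP [a1|a2] /orP [b1|b2].
- by exists [:: c2; b]; rewrite /= !inE c2D b1 orbT (fw a c2) ?(bw b c2).
- by exists [:: b]; rewrite /= !inE b2 orbT (fw a b).
- by exists [:: b]; rewrite /= !inE b1 (bw b a).
- by exists [:: c1; b]; rewrite /= !inE c1D b2 orbT (bw c1 a) ?(fw c1 b).
Qed.

Definition series_haven (A1 A2 : {set T}) (b1 b2 : {set T} -> {set T}) (Z : {set T}) :=
  if A2 \subset Z then b1 Z else if A1 \subset Z then b2 Z else (A1 :|: A2) :\: Z.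

Lemma haven_series_side A A1 A2 k1 k b1 (Z : {set T}) :
  A1 :|: A2 = A -> haven A1 k1 b1 -> [disjoint A1 & A2] ->
  k <= k1 + #|A2| -> #|Z :&: A| <= k -> A2 \subset Z ->
  [/\ b1 Z != set0, b1 Z \subset A :\: Z, linked_in (A :\: Z) (b1 Z) &
      forall Z' : {set T}, Z :&: A \subset Z' -> #|Z' :&: A| <= k ->
        A2 \subset Z' /\ b1 Z' \subset b1 Z].
Proof.
move=> <- h1 dA kk kZ A2Z.
have order Z' : #|Z' :&: (A1 :|: A2)| <= k -> A2 \subset Z' -> #|Z' :&: A1| <= k1.
  by move=> kZ' sZ'; move: kZ'; rewrite cardsIU_disjoint // (setIidPr sZ'); lia.
have sD : A1 :\: Z \subset (A1 :|: A2) :\: Z by apply/setSD/subsetUl.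
have [ne sub lnk mono] := h1 Z (order Z kZ A2Z).
split=> //; [exact: subset_trans sub sD | exact: linked_in_sub sD lnk |].
move=> Z' sZ kZ'; have A2Z' : A2 \subset Z'.
  by apply: subset_trans sZ; rewrite subsetI A2Z subsetUr.
split=> //; apply: mono (order Z' kZ' A2Z').
exact: subset_trans (setIS _ (subsetUl _ _)) sZ.
Qed.

Lemma haven_series A1 A2 k1 k2 b1 b2 :
  haven A1 k1 b1 -> haven A2 k2 b2 -> [disjoint A1 & A2] ->
  (forall x y, x \in A1 -> y \in A2 -> E x y && E y x) ->
  haven (A1 :|: A2) (minn (k1 + #|A2|) (k2 + #|A1|)) (series_haven A1 A2 b1 b2).
Proof.
move=> h1 h2 dA both; set k := minn _ _; set A := A1 :|: A2.
have side1 Z := haven_series_side (Z := Z) (erefl A) h1 dA (geq_minl _ _ : k <= _).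
have dA' : [disjoint A2 & A1] by rewrite disjoint_sym.
have side2 Z := haven_series_side (Z := Z) (setUC A2 A1) h2 dA' (geq_minr _ _ : k <= _).
have not_both Z : #|Z :&: A| <= k -> A1 \subset Z -> ~~ (A2 \subset Z).
  move=> kZ s1; apply/negP => s2; move: kZ (haven_card h1).
  by rewrite cardsIU_disjoint // (setIidPr s1) (setIidPr s2); lia.
have sub Z : #|Z :&: A| <= k -> series_haven A1 A2 b1 b2 Z \subset A :\: Z.
  rewrite /series_haven => kZ; case: ifP => [s2|_]; first by case: (side1 Z kZ s2).
  by case: ifP => [s1|_]; [case: (side2 Z kZ s1) | exact: subxx].
move=> Z kZ; have [s2|n2] := boolP (A2 \subset Z).
  have -> : series_haven A1 A2 b1 b2 Z = b1 Z by rewrite /series_haven s2.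
  have [ne sb lnk mono] := side1 Z kZ s2; split=> // Z' sZ kZ'.
  by have [s2' le] := mono Z' sZ kZ'; rewrite /series_haven s2'.
have [s1|n1] := boolP (A1 \subset Z).
  have -> : series_haven A1 A2 b1 b2 Z = b2 Z by rewrite /series_haven (negbTE n2) s1.
  have [ne sb lnk mono] := side2 Z kZ s1; split=> // Z' sZ kZ'.
  have [s1' le] := mono Z' sZ kZ'.
  by rewrite /series_haven s1' (negbTE (not_both Z' kZ' s1')).
have -> : series_haven A1 A2 b1 b2 Z = A :\: Z.
  by rewrite /series_haven (negbTE n2) (negbTE n1).
split=> [||| Z' sZ kZ'].
- by case/subsetPn: n1 => x x1 xZ; apply/set0Pn; exists x; rewrite !inE xZ x1.
- exact: subxx.
- rewrite setDUl; apply: linked_in_join.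
  + by case/subsetPn: n1 => x x1 xZ; apply/set0Pn; exists x; rewrite !inE xZ x1.
  + by case/subsetPn: n2 => x x2 xZ; apply/set0Pn; exists x; rewrite !inE xZ x2.
  + by move=> x y /setDP [x1 _] /setDP [y2 _]; exact: both.
- apply: subset_trans (sub Z' kZ') _; apply/subsetP => x.
  rewrite !in_setD => /andP [xZ' xA]; rewrite xA andbT.
  by apply: contra xZ' => xZ; apply: (subsetP sZ); rewrite inE xZ.
Qed.

Definition tight (A : {set T}) := exists k,
  (exists beta, haven A k beta) /\
  (exists2 s, dpd_on A s & all (fun X : {set T} => #|X| <= k.+1) s).

Lemma tight_set1 x : tight [set x].
Proof.
exists 0; split; last by exists [:: [set x]]; [exact: dpd_on_set1 | rewrite /= cards1].
exists (fun _ => [set x]) => Z; rewrite leqn0 cards_eq0 => /eqP Zx.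
have xZ : x \notin Z by apply/negP => xZ; move/setP/(_ x): Zx; rewrite !inE xZ eqxx.
split=> [||a b /set1P -> /set1P ->|]; last by move=> *; exact: subxx.
- by apply/set0Pn; exists x; rewrite inE.
- by rewrite sub1set !inE xZ eqxx.
- by exists [::].
Qed.

Lemma tight_union A1 A2 : tight A1 -> tight A2 -> [disjoint A1 & A2] ->
  (forall x y, x \in A1 -> y \in A2 -> ~~ E y x) -> tight (A1 :|: A2).
Proof.
move=> [k1 [[b1 h1] [s1 d1 w1]]] [k2 [[b2 h2] [s2 d2 w2]]] dA noE.
exists (maxn k1 k2); split.
  have [_|_] := leqP k2 k1.
  - by exists b1; apply: haven_subset h1; exact: subsetUl.
  - by exists b2; apply: haven_subset h2; exact: subsetUr.
exists (s1 ++ s2); first exact: dpd_on_cat.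
rewrite all_cat; apply/andP; split; [apply: sub_all w1 | apply: sub_all w2];
  by move=> X /leq_trans; apply; rewrite ltnS ?leq_maxl ?leq_maxr.
Qed.

Lemma tight_series A1 A2 : tight A1 -> tight A2 -> [disjoint A1 & A2] ->
  (forall x y, x \in A1 -> y \in A2 -> E x y && E y x) -> tight (A1 :|: A2).
Proof.
move=> [k1 [[b1 h1] [s1 d1 w1]]] [k2 [[b2 h2] [s2 d2 w2]]] dA both.
exists (minn (k1 + #|A2|) (k2 + #|A1|)); split.
  by exists (series_haven A1 A2 b1 b2); exact: haven_series.
have ne A k b : haven A k b -> A != set0.
  by move/haven_card; rewrite -card_gt0; exact: leq_ltn_trans.
have [_|_] := leqP (k1 + #|A2|) (k2 + #|A1|).
- exists [seq X :|: A2 | X <- s1]; first exact: dpd_on_setUr (ne _ _ _ h1).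
  apply/allP => _ /mapP [X Xs ->].
  by have := allP w1 X Xs; rewrite cardsU; lia.
- exists [seq X :|: A1 | X <- s2].
    by rewrite setUC; exact: dpd_on_setUr (ne _ _ _ h2).
  apply/allP => _ /mapP [X Xs ->].
  by have := allP w2 X Xs; rewrite cardsU; lia.
Qed.

Lemma tight_bigcup (P : T -> T -> bool) :
  (forall A1 A2, tight A1 -> tight A2 -> [disjoint A1 & A2] ->
     (forall x y, x \in A1 -> y \in A2 -> P x y) -> tight (A1 :|: A2)) ->
  forall s : seq {set T}, 0 < size s -> parts_disjoint s ->
  (forall B, B \in s -> tight B) ->
  (forall i j x y, i < j < size s -> x \in nth set0 s i -> y \in nth set0 s j -> P x y) ->
  tight (\bigcup_(B <- s) B).
Proof.
move=> tightU; elim=> [|B [|B' s] IH] //= _ dis tB cP.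
  by rewrite big_seq1; apply: tB; rewrite mem_seq1.
rewrite big_cons; apply: tightU.
- by apply: tB; rewrite in_cons eqxx.
- apply: IH => // [i j il jl ij|X Xs|i j]; first exact: (dis i.+1 j.+1).
    by apply: tB; rewrite in_cons Xs orbT.
  exact: (cP i.+1 j.+1).
- rewrite -setI_eq0; apply/eqP/setP => x; rewrite !inE; apply/negP => /andP [xB].
  case/mem_bigcup_nth => j jl xj.
  by move: (dis 0 j.+1 isT jl isT) => /disjointFr /(_ xB); rewrite /= xj.
- by move=> x y xB /mem_bigcup_nth [j jl yj]; exact: (cP 0 j.+1).
Qed.

Lemma tight_dcograph A : dcograph_on E A -> tight A.
Proof.
elim=> [x|s sn dis _ tB noE|s sn dis _ tB both|s sn dis _ tB ord].
- exact: tight_set1.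
- apply: (tight_bigcup (P := fun x y => ~~ E y x) tight_union) => // i j x y.
  case/andP=> ij jl xi yj; have il := ltn_trans ij jl.
  by apply: (noE j i) => //; rewrite gtn_eqF.
- apply: (tight_bigcup tight_series) => // i j x y /andP [ij jl] xi yj.
  have il := ltn_trans ij jl; have nij : i != j by rewrite ltn_eqF.
  by rewrite (both i j x y) ?(both j i y x) // eq_sym.
- apply: (tight_bigcup (P := fun x y => ~~ E y x) tight_union) => // i j x y.
  case/andP=> ij jl xi yj.
  by case/andP: (ord i j x y (ltn_trans ij jl) jl ij xi yj).
Qed.

End Digraph.

Unset Implicit Arguments.

Theorem theorem5p3 (T : finType) (E : rel T) :
  irreflexive E -> directed_cograph E ->
  exists k : nat, is_dpw E k /\ is_dtw E k.
Proof.
move=> _ /tight_dcograph [k [[beta hv] [s /dpd_onT ds ks]]].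
have [x0 _] : exists x, x \in beta set0.
  by have [|/set0Pn] := hv set0; first by rewrite set0I cards0.
have sk : dpd_width s <= k by apply/dpd_width_leqP => X /(allP ks).
have [m [ET [X [W [dt tw]]]]] := dpd_to_dtd x0 ds.
exists k; split; split.
- by exists s; split=> //; apply/eqP; rewrite eqn_leq sk (haven_dpd_width hv ds).
- by move=> s'; exact: haven_dpd_width hv.
- exists m, ET, X, W; split=> //; apply/eqP.
  by rewrite eqn_leq (leq_trans tw sk) (haven_dtd_width hv dt).
- by move=> m' ET' X' W'; exact: haven_dtd_width hv.
Qed.
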